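(* For every $n\ge1$: $2r_n\in C(2r_{n+1})$, $4r_n\in C(4r_{n+1})$, $2t_n\in C(2t_{n+1})$, $2s_n\in C(2s_{n+1})$, $2p_n\in C(2p_{n+1})$, $2q_n\in C(2q_{n+1})$, $2u_n\in C(2u_{n+1})$ and $2w_n\in C(2w_{n+1})$. For every $n\ge 2$: $2v_n\in C(2v_{n+1})$.
   Context: All operations are on $\mathbb{Z}_8$. For an operation $f$, $C(f)$ denotes the clone generated by $f$ together with binary addition and all unary constant operations. For $n\ge1$: $r_n=x_1\cdots x_n$; $t_n=x_1\cdots x_n(x_1+\dots+x_n)$ if $n$ is even and $t_n=x_1\cdots x_n(x_1+\dots+x_n+1)$ if $n$ is odd; $s_n=x_1\cdots x_n(x_1+\dots+x_n)$ if $n$ is odd and $s_n=x_1\cdots x_n(x_1+\dots+x_n+1)$ if $n$ is even; $p_n=x_1^2x_2\cdots x_n$; $q_n=x_1^3x_2\cdots x_n$; $w_n=x_1\cdots x_n(x_1^2+1)$; $u_n=x_1\cdots x_n(x_1+1)$; for $n\ge 2$, $v_n=x_1\cdots x_n(x_1+x_2)$. *)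

From mathcomp Require Import all_boot all_order all_algebra.
Set Implicit Arguments. Unset Strict Implicit. Unset Printing Implicit Defensive.
Import GRing.Theory.
Local Open Scope ring_scope.

Notation Z8 := 'Z_8.

Definition op (n : nat) := {ffun 'I_n -> Z8} -> Z8.

(* clone_gen f k g : the k-ary operation g belongs to C(f), the clone generated
   by f together with binary addition and all unary constant operations.
   (Extensional: ops equal pointwise are identified.) *)
Inductive clone_gen (m : nat) (f : op m) : forall k, op k -> Prop :=
| cg_base : clone_gen f f
| cg_proj : forall k (i : 'I_k), clone_gen f (fun x : {ffun 'I_k -> Z8} => x i)
| cg_add : clone_gen f (fun x : {ffun 'I_2 -> Z8} => x ord0 + x ord_max)
| cg_const : forall c : Z8, clone_gen f (fun _ : {ffun 'I_1 -> Z8} => c)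
| cg_comp : forall j k (g : op j) (h : 'I_j -> op k),
    clone_gen f g -> (forall i, clone_gen f (h i)) ->
    clone_gen f (fun x : {ffun 'I_k -> Z8} => g [ffun i => h i x])
| cg_ext : forall k (g g' : op k),
    clone_gen f g -> (forall x, g x = g' x) -> clone_gen f g'.

Definition C (m : nat) (f : op m) (k : nat) (g : op k) : Prop := clone_gen f g.

(* The first variable x_1 (for n >= 1), written as a sum over the index 0. *)
Definition x1 n (x : {ffun 'I_n -> Z8}) : Z8 := \sum_(i < n | val i == 0%N) x i.
Definition x2 n (x : {ffun 'I_n -> Z8}) : Z8 := \sum_(i < n | val i == 1%N) x i.

Definition prodx n (x : {ffun 'I_n -> Z8}) : Z8 := \prod_(i < n) x i.
Definition sumx n (x : {ffun 'I_n -> Z8}) : Z8 := \sum_(i < n) x i.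

Definition r n : op n := fun x => prodx x.
Definition t n : op n := fun x =>
  prodx x * (sumx x + (if odd n then 1 else 0)).
Definition s n : op n := fun x =>
  prodx x * (sumx x + (if odd n then 0 else 1)).
Definition p n : op n := fun x => x1 x ^+ 2 * \prod_(i < n | val i != 0%N) x i.
Definition q n : op n := fun x => x1 x ^+ 3 * \prod_(i < n | val i != 0%N) x i.
Definition w n : op n := fun x => prodx x * (x1 x ^+ 2 + 1).
Definition u n : op n := fun x => prodx x * (x1 x + 1).
Definition v n : op n := fun x => prodx x * (x1 x + x2 x).

Definition smul n (c : Z8) (f : op n) : op n := fun x => c * f x.
Arguments r : clear implicits.
Arguments t : clear implicits.
Arguments s : clear implicits.
Arguments p : clear implicits.
Arguments q : clear implicits.
Arguments w : clear implicits.
Arguments u : clear implicits.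
Arguments v : clear implicits.

From mathcomp Require Import all_boot all_order all_algebra.
From mathcomp Require Import ring.
Local Open Scope ring_scope.
Import GRing.Theory.
Set Implicit Arguments. Unset Strict Implicit. Unset Printing Implicit Defensive.

(* Every one of these operations of arity n+1 specialises to its n-ary
   counterpart, possibly up to sign, when the last variable is fixed to a
   constant c in {1, -1}: the extra factor c in the product is then a unit, and
   for t_n and s_n the choice c = -1 also cancels the constant +1 while
   flipping the parity of n.  Substituting a constant is a clone operation
   (composition with projections and a unary constant), and so is negation,
   since in Z_8 one has -y = 7y = y + ... + y.  Hence a f_n lies in C(a f_{n+1})
   for every scalar a, in particular for 2 and 4. *)

Definition extend n (x : {ffun 'I_n -> Z8}) (c : Z8) : {ffun 'I_n.+1 -> Z8} :=
  [ffun i => if unlift ord_max i is Some j then x j else c].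

Lemma extend_widen n (x : {ffun 'I_n -> Z8}) c (i : 'I_n) :
  extend x c (widen_ord (leqnSn n) i) = x i.
Proof.
have -> : widen_ord (leqnSn n) i = lift ord_max i.
  by apply/val_inj; rewrite /= /bump leqNgt ltn_ord.
by rewrite ffunE liftK.
Qed.

Lemma extend_max n (x : {ffun 'I_n -> Z8}) c : extend x c ord_max = c.
Proof. by rewrite ffunE unlift_none. Qed.

Section CloneClosure.
Variables (m : nat) (f : op m).

Lemma clone_gen_addf k (g1 g2 : op k) :
  clone_gen f g1 -> clone_gen f g2 -> clone_gen f (fun x => g1 x + g2 x).
Proof.
move=> cg1 cg2; pose h (i : 'I_2) := if val i == 0%N then g1 else g2.
apply: (cg_ext (cg_comp (cg_add f) (h := h) _)) => [i | x].
  by rewrite /h; case: ifP.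
by rewrite !ffunE.
Qed.

Lemma clone_gen_mulSn k (g : op k) j :
  clone_gen f g -> clone_gen f (fun x => g x *+ j.+1).
Proof.
move=> cg; elim: j => [|j IHj].
  by apply: (cg_ext cg) => x; rewrite mulr1n.
by apply: (cg_ext (clone_gen_addf IHj cg)) => x; rewrite [RHS]mulrS addrC.
Qed.

Lemma clone_gen_opp k (g : op k) :
  clone_gen f g -> clone_gen f (fun x => - g x).
Proof.
move=> /(clone_gen_mulSn 6) cg; apply: (cg_ext cg) => x.
apply/eqP; rewrite -subr_eq0 opprK -mulrSr -mulr_natr.
by rewrite (_ : 8%:R = 0 :> Z8) ?mulr0 //; apply/val_inj.
Qed.

Lemma clone_gen_cst k (c : Z8) :
  (0 < k)%N -> clone_gen f (fun _ : {ffun 'I_k -> Z8} => c).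
Proof.
move=> k_gt0; pose i0 : 'I_k := Ordinal k_gt0.
apply: (cg_ext (cg_comp (cg_const f c) (h := fun _ x => x i0) _)) => // _.
exact: cg_proj.
Qed.

End CloneClosure.

Lemma clone_gen_extend n (f : op n.+1) (c : Z8) :
  (0 < n)%N -> clone_gen f (fun x : {ffun 'I_n -> Z8} => f (extend x c)).
Proof.
move=> n_gt0; pose h (i : 'I_n.+1) : op n :=
  if unlift ord_max i is Some j then fun x => x j else fun _ => c.
apply: (cg_ext (cg_comp (cg_base f) (h := h) _)) => [i | x].
  by rewrite /h; case: unlift => [j|]; [apply: cg_proj | apply: clone_gen_cst].
by congr f; apply/ffunP => i; rewrite !ffunE /h; case: unlift.
Qed.

Section Specialisation.
Variables (n : nat) (a : Z8) (F : op n.+1) (G : op n).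
Hypothesis n_gt0 : (0 < n)%N.

Lemma C_smul_extend1 :
  (forall x, F (extend x 1) = G x) -> C (smul a F) (smul a G).
Proof.
move=> FG; apply: (cg_ext (clone_gen_extend (smul a F) 1 n_gt0)) => x.
by rewrite /smul FG.
Qed.

Lemma C_smul_extendN1 :
  (forall x, F (extend x (-1)) = - G x) -> C (smul a F) (smul a G).
Proof.
move=> FG; apply: (cg_ext (clone_gen_opp (clone_gen_extend (smul a F) (-1) n_gt0))) => x.
by rewrite /smul FG mulrN opprK.
Qed.

End Specialisation.

Section ExtendStatistics.
Variables (n : nat) (x : {ffun 'I_n -> Z8}) (c : Z8).

Lemma prodx_extend : prodx (extend x c) = prodx x * c.
Proof.
by rewrite /prodx big_ord_recr /= extend_max; under eq_bigr do rewrite extend_widen.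
Qed.

Lemma sumx_extend : sumx (extend x c) = sumx x + c.
Proof.
by rewrite /sumx big_ord_recr /= extend_max; under eq_bigr do rewrite extend_widen.
Qed.

Lemma x1_extend : (0 < n)%N -> x1 (extend x c) = x1 x.
Proof.
move=> n_gt0; rewrite /x1 big_mkcond big_ord_recr /= extend_max.
rewrite (negbTE (_ : n != 0%N)) ?addr0 -?lt0n // [RHS]big_mkcond.
by apply: eq_bigr => i _; rewrite extend_widen.
Qed.

Lemma x2_extend : (1 < n)%N -> x2 (extend x c) = x2 x.
Proof.
move=> n_gt1; rewrite /x2 big_mkcond big_ord_recr /= extend_max.
rewrite (negbTE (_ : n != 1%N)) ?addr0; last by case: n n_gt1 => [|[]].
by rewrite [RHS]big_mkcond; apply: eq_bigr => i _; rewrite extend_widen.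
Qed.

Lemma prod_tail_extend : (0 < n)%N ->
  \prod_(i < n.+1 | val i != 0%N) extend x c i
    = (\prod_(i < n | val i != 0%N) x i) * c.
Proof.
move=> n_gt0; rewrite big_mkcond big_ord_recr /= extend_max.
rewrite (_ : n != 0%N) -?lt0n // [in RHS]big_mkcond; congr (_ * _).
by apply: eq_bigr => i _; rewrite extend_widen.
Qed.

Lemma prodx_sumx_extend e :
  prodx (extend x c) * (sumx (extend x c) + e)
    = c * (prodx x * (sumx x + (c + e))).
Proof. by rewrite prodx_extend sumx_extend; ring. Qed.

End ExtendStatistics.

Section Families.
Variables (n : nat) (a : Z8).
Hypothesis n_gt0 : (0 < n)%N.

Lemma C_smul_r : C (smul a (r n.+1)) (smul a (r n)).
Proof. by apply: C_smul_extend1 => // x; rewrite /r prodx_extend mulr1. Qed.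

Lemma C_smul_t : C (smul a (t n.+1)) (smul a (t n)).
Proof.
rewrite /t /=; case: (odd n).
  by apply: C_smul_extend1 => // x; rewrite prodx_sumx_extend mul1r addr0.
by apply: C_smul_extendN1 => // x; rewrite prodx_sumx_extend addNr mulN1r.
Qed.

Lemma C_smul_s : C (smul a (s n.+1)) (smul a (s n)).
Proof.
rewrite /s /=; case: (odd n).
  by apply: C_smul_extendN1 => // x; rewrite prodx_sumx_extend addNr mulN1r.
by apply: C_smul_extend1 => // x; rewrite prodx_sumx_extend mul1r addr0.
Qed.

Lemma C_smul_p : C (smul a (p n.+1)) (smul a (p n)).
Proof.
by apply: C_smul_extend1 => // x; rewrite /p x1_extend // prod_tail_extend // mulr1.
Qed.

Lemma C_smul_q : C (smul a (q n.+1)) (smul a (q n)).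
Proof.
by apply: C_smul_extend1 => // x; rewrite /q x1_extend // prod_tail_extend // mulr1.
Qed.

Lemma C_smul_u : C (smul a (u n.+1)) (smul a (u n)).
Proof.
by apply: C_smul_extend1 => // x; rewrite /u x1_extend // prodx_extend mulr1.
Qed.

Lemma C_smul_w : C (smul a (w n.+1)) (smul a (w n)).
Proof.
by apply: C_smul_extend1 => // x; rewrite /w x1_extend // prodx_extend mulr1.
Qed.

Lemma C_smul_v : (1 < n)%N -> C (smul a (v n.+1)) (smul a (v n)).
Proof.
move=> n_gt1; apply: C_smul_extend1 => // x.
by rewrite /v x1_extend // x2_extend // prodx_extend mulr1.
Qed.

End Families.

Theorem lemma4p2 :
  (forall n : nat, (1 <= n)%N ->
     C (smul 2 (r n.+1)) (smul 2 (r n)) /\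
         C (smul 4 (r n.+1)) (smul 4 (r n)) /\
         C (smul 2 (t n.+1)) (smul 2 (t n)) /\
         C (smul 2 (s n.+1)) (smul 2 (s n)) /\
         C (smul 2 (p n.+1)) (smul 2 (p n)) /\
         C (smul 2 (q n.+1)) (smul 2 (q n)) /\
         C (smul 2 (u n.+1)) (smul 2 (u n)) /\
         C (smul 2 (w n.+1)) (smul 2 (w n))) /\
  (forall n : nat, (2 <= n)%N -> C (smul 2 (v n.+1)) (smul 2 (v n))).
Proof.
split=> [n n_gt0 | n n_gt1]; last exact: C_smul_v (ltnW n_gt1) n_gt1.
by do !split; [ exact: C_smul_r | exact: C_smul_r | exact: C_smul_t
              | exact: C_smul_s | exact: C_smul_p | exact: C_smul_q
              | exact: C_smul_u | exact: C_smul_w ].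
Qed.
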